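(* Let $F \in S$ be a homogeneous form of degree $d$ and let $\alpha \in T_1$ be a linear form. Then $r(F) \geq \mathrm{al}(\alpha\circ F) - \mathrm{al}(\alpha^2\circ F)$.
   Context: $S=\mathbb{C}[x_1,\dots,x_n]$, $T=\mathbb{C}[\alpha_1,\dots,\alpha_n]$ acting on $S$ by $\alpha_i\mapsto\partial/\partial x_i$ (written $\Theta\circ F$). $\mathrm{al}(G)=\dim_{\mathbb{C}}\{\Theta\circ G:\Theta\in T\}$ is the apolar length (dimension of the space of all partial derivatives of all orders of $G$, including $G$; it is $0$ if $G=0$). $r(F)$ is the Waring rank: the least $r$ with $F=\sum_{i=1}^r c_i\ell_i^d$ for linear forms $\ell_i$ and scalars $c_i$. *)

From HB Require Import structures.
From mathcomp Require Import all_boot all_order all_algebra.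
Set Implicit Arguments. Unset Strict Implicit. Unset Printing Implicit Defensive.
Import Order.TTheory GRing.Theory Num.Theory.
Local Open Scope ring_scope.

(* Model of the polynomial ring S = K[x_1..x_n] restricted to the
   finite-dimensional subspace P_{n,d} of polynomials in which every
   variable occurs with exponent <= d.  This subspace contains every
   polynomial of total degree <= d and is closed under all partial
   derivatives, so everything in the statement lives in it. *)

Notation mon n d := {ffun 'I_n -> 'I_d.+1}.

Notation mpoly K n d := {ffun mon n d -> K^o}.

Section MPoly.
Variables (K : fieldType) (n d : nat).

Definition mdeg (m : mon n d) : nat := (\sum_(i < n) (m i : nat))%N.

Definition homogeneous (e : nat) (p : mpoly K n d) : Prop :=
  forall m : mon n d, p m != 0 -> mdeg m = e.

(* product (monomials whose exponents would exceed d are dropped; this is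
   exact on products of total degree <= d, e.g. powers l^k, k <= d) *)
Definition mmul (p q : mpoly K n d) : mpoly K n d :=
  [ffun m : mon n d => \sum_(m1 : mon n d) \sum_(m2 : mon n d |
      [forall i, ((m1 i : nat) + (m2 i : nat) == (m i : nat))%N])
      p m1 * q m2].

Definition mone : mpoly K n d :=
  [ffun m : mon n d => if [forall i, (m i : nat) == 0%N] then 1 else 0].

Definition mpow (p : mpoly K n d) (k : nat) : mpoly K n d := iter k (mmul p) mone.

Definition linform (a : 'I_n -> K) : mpoly K n d :=
  [ffun m : mon n d => \sum_(i < n)
     if ((m i : nat) == 1%N) && (mdeg m == 1%N) then a i else 0].

(* m + e_i (only used when m i < d) *)
Definition mbump (m : mon n d) (i : 'I_n) : mon n d :=
  [ffun j : 'I_n => if j == i then inord (m j).+1 else m j].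

Definition pderiv (i : 'I_n) (p : mpoly K n d) : mpoly K n d :=
  [ffun m : mon n d => if ((m i : nat) < d)%N then ((m i).+1)%:R * p (mbump m i) else 0].

Definition pderivm (a : mon n d) (p : mpoly K n d) : mpoly K n d :=
  foldr (fun i q => iter (a i) (pderiv i) q) p (enum 'I_n).

(* apolar action of the linear form alpha = sum_i a_i alpha_i in T_1 *)
Definition lin_apolar (a : 'I_n -> K) (G : mpoly K n d) : mpoly K n d :=
  \sum_(i < n) a i *: pderiv i G.

(* Derivative orders with some exponent > d
   annihilate every element of P_{n,d}, so they are omitted. *)
Definition apolar_length (G : mpoly K n d) : nat :=
  \dim <<[seq pderivm a G | a <- enum (mon n d)]>>%VS.

Definition waring_decomp (F : mpoly K n d) (r : nat) : Prop :=
  exists (c : 'I_r -> K) (l : 'I_r -> 'I_n -> K),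
    F = \sum_(j < r) c j *: mpow (linform (l j)) d.

End MPoly.

From HB Require Import structures.
From mathcomp Require Import all_boot all_order all_algebra.
Import GRing.Theory.
Local Open Scope ring_scope.
Set Implicit Arguments. Unset Strict Implicit.

(* Write F = sum_j c_j l_j^d.  All partial derivatives of alpha o F lie in the
   span V of the alpha(l_j) l_j^k, k < d, which is stable under derivation and
   on which alpha o acts by l_j^(k+1) |-> (k+1) alpha(l_j) l_j^k.  Hence V is
   covered by alpha o V plus the r vectors alpha(l_j) l_j^(d-1), so the kernel
   of alpha o on V has dimension at most r.  As alpha o maps the derivative
   space of alpha o F onto that of alpha^2 o F, rank-nullity gives
   al(alpha o F) <= al(alpha^2 o F) + r. *)

Section Monomials.
Variables n d : nat.
Local Notation M := (mon n d).

Lemma mon_ext (m m' : M) : (forall j, (m j : nat) = m' j) -> m = m'.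
Proof. by move=> eq_mm'; apply/ffunP=> j; apply: val_inj; exact: eq_mm'. Qed.

Lemma mdeg_bigD1 (m : M) i : mdeg m = (m i + \sum_(j < n | j != i) m j)%N.
Proof. by rewrite /mdeg (bigD1 i). Qed.

Lemma leq_mon_mdeg (m : M) i : (m i <= mdeg m)%N.
Proof. by rewrite (mdeg_bigD1 _ i) leq_addr. Qed.

Lemma mbump_val (m : M) i j : (m i < d)%N ->
  (mbump m i j : nat) = if j == i then (m i).+1 else m j.
Proof. by move=> lt_mi_d; rewrite ffunE; case: eqP => [->|//]; rewrite inordK. Qed.

Lemma mbump_neq (m : M) i j : j != i -> mbump m i j = m j.
Proof. by move=> neq_ji; rewrite ffunE (negbTE neq_ji). Qed.

Lemma mbumpC (m : M) i j : i != j -> mbump (mbump m i) j = mbump (mbump m j) i.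
Proof.
move=> neq_ij; apply/ffunP => t; rewrite !ffunE.
by case: (eqVneq t i) => [->|//]; rewrite (negbTE neq_ij).
Qed.

(* [m - e_i]; only used when [m i > 0] *)
Definition mdrop (m : M) (i : 'I_n) : M :=
  [ffun j : 'I_n => if j == i then inord (m j).-1 else m j].

Lemma mdrop_val (m : M) i j : (mdrop m i j : nat) = if j == i then (m i).-1 else m j.
Proof.
rewrite ffunE; case: eqP => [->|//]; rewrite inordK //.
exact: leq_ltn_trans (leq_pred _) (ltn_ord _).
Qed.

Lemma mbumpK (m : M) i : (m i < d)%N -> mdrop (mbump m i) i = m.
Proof.
move=> lt_mi_d; apply: mon_ext => j; rewrite mdrop_val.
case: (eqVneq j i) => [->|neq_ji]; first by rewrite mbump_val // eqxx.
by rewrite mbump_neq.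
Qed.

Lemma mdropK (m : M) i : (0 < m i)%N -> mbump (mdrop m i) i = m.
Proof.
move=> mi_gt0; apply: mon_ext => j; rewrite ffunE.
case: (eqVneq j i) => [->|neq_ji]; last by rewrite mdrop_val (negbTE neq_ji).
by rewrite mdrop_val eqxx prednK // inordK.
Qed.

Lemma mdeg_mdrop (m : M) i : (0 < m i)%N -> mdeg m = (mdeg (mdrop m i)).+1.
Proof.
move=> mi_gt0; rewrite !(mdeg_bigD1 _ i) mdrop_val eqxx -addSn prednK //.
by congr (_ + _)%N; apply: eq_bigr => j neq_ji; rewrite mdrop_val (negbTE neq_ji).
Qed.

(* the exponent vector [e_i] of [x_i]; meaningful only when [0 < d] *)
Definition munit (i : 'I_n) : M := [ffun j => if j == i then inord 1 else ord0].

Lemma munit_val i j : (0 < d)%N -> (munit i j : nat) = (j == i).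
Proof. by move=> d_gt0; rewrite ffunE; case: eqP => //; rewrite inordK. Qed.

Lemma munitP (m : M) i :
  ((m i == 1 :> nat) && (mdeg m == 1%N)) = (0 < d)%N && (m == munit i).
Proof.
have [d0|d_gt0] := posnP d.
  have mi_neq1 : (m i == 1 :> nat) = false.
    by apply/negbTE; rewrite neq_ltn (leq_trans (ltn_ord _)) ?d0.
  by rewrite mi_neq1.
apply/andP/eqP=> [[/eqP mi1 /eqP]|->]; last first.
  rewrite munit_val // eqxx (mdeg_bigD1 _ i) munit_val // eqxx big1 //.
  by move=> j /negbTE neq_ji; rewrite munit_val // neq_ji.
rewrite (mdeg_bigD1 _ i) mi1 add1n => /eqP; rewrite eqSS sum_nat_eq0 => /forallP m0.
apply: mon_ext => j; rewrite munit_val //; case: (eqVneq j i) => [->//|neq_ji].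
by apply/eqP; have := m0 j; rewrite neq_ji.
Qed.

Lemma munit_addP (m m2 : M) i : (0 < d)%N ->
  [forall j, (munit i j + m2 j == m j)%N] = (0 < m i)%N && (m2 == mdrop m i).
Proof.
move=> d_gt0; apply/forallP/andP => [sum_m|[mi_gt0 /eqP->] j]; last first.
  rewrite munit_val // mdrop_val.
  by case: (eqVneq j i) => [->|_]; rewrite ?add1n ?prednK.
have := sum_m i; rewrite munit_val // eqxx add1n => /eqP mi.
split; first by rewrite -mi.
apply/eqP/mon_ext => j; rewrite mdrop_val -mi /=.
case: (eqVneq j i) => [->//|neq_ji].
by have := sum_m j; rewrite munit_val // (negbTE neq_ji) => /eqP.
Qed.

End Monomials.

Arguments munit {n d} i.

Section Derivatives.
Variables (K : fieldType) (n d : nat).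
Local Notation M := (mon n d).
Local Notation P := (mpoly K n d).

Lemma pderivE i (p : P) m :
  pderiv i p m = if (m i < d)%N then (m i).+1%:R * p (mbump m i) else 0.
Proof. by rewrite ffunE. Qed.

Lemma scale_regularE (c x : K^o) : c *: x = c * x.
Proof. by []. Qed.

Lemma pderiv_is_linear i : linear (@pderiv K n d i).
Proof.
move=> c p q; apply/ffunP=> m; rewrite !ffunE.
by case: ifP => _; rewrite !scale_regularE ?mulr0 ?addr0 // mulrDr mulrCA.
Qed.

HB.instance Definition _ i :=
  GRing.isLinear.Build K P P *:%R (@pderiv K n d i) (pderiv_is_linear i).

Lemma pderivC i j (p : P) : pderiv i (pderiv j p) = pderiv j (pderiv i p).
Proof.
have [->//|neq_ij] := eqVneq i j.
have neq_ji : j != i by rewrite eq_sym.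
apply/ffunP=> m; rewrite !pderivE !mbump_neq // mbumpC //.
by case: ifP => _; case: ifP => _; rewrite ?mulr0 // mulrCA.
Qed.

(* multiplication by [x_i], truncated like [mmul] *)
Definition mulX (i : 'I_n) (p : P) : P :=
  [ffun m : M => if (0 < m i)%N then p (mdrop m i) else 0].

Lemma mulXE i (p : P) m : mulX i p m = if (0 < m i)%N then p (mdrop m i) else 0.
Proof. by rewrite ffunE. Qed.

Lemma mulX_is_linear i : linear (mulX i).
Proof.
by move=> c p q; apply/ffunP=> m; rewrite !ffunE; case: ifP; rewrite ?scale_regularE ?mulr0 ?addr0.
Qed.

HB.instance Definition _ i :=
  GRing.isLinear.Build K P P *:%R (mulX i) (mulX_is_linear i).

Lemma mmul_linform (l : 'I_n -> K) (p : P) :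
  mmul (linform d l) p = \sum_(j < n) l j *: mulX j p.
Proof.
apply/ffunP=> m; rewrite sum_ffunE ffunE.
under eq_bigr do under eq_bigr do rewrite ffunE mulr_suml.
under eq_bigr do rewrite exchange_big /=.
rewrite exchange_big /=; apply: eq_bigr => j _; rewrite !ffunE.
under eq_bigr do under eq_bigr do rewrite munitP.
have [d0|d_gt0] := posnP d.
  have mj0 : (m j : nat) = 0%N.
    by apply/eqP; rewrite -leqn0 -ltnS (leq_trans (ltn_ord _)) ?d0.
  by rewrite mj0 /= scaler0; apply: big1 => m1 _; apply: big1 => m2 _; rewrite mul0r.
rewrite (bigD1 (munit j)) //= [X in _ + X]big1 ?addr0; last first.
  by move=> m1 /negbTE neq_m1; apply: big1 => m2 _; rewrite neq_m1 mul0r.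
under eq_bigr do rewrite eqxx.
under eq_bigl => m2 do rewrite munit_addP //.
case: (0 < m j)%N => /=; first by rewrite big_pred1_eq.
by rewrite big_pred0_eq scaler0.
Qed.

Lemma pderiv_mulX i j (p : P) : i != j -> pderiv i (mulX j p) = mulX j (pderiv i p).
Proof.
move=> neq_ij; have neq_ji : j != i by rewrite eq_sym.
apply/ffunP=> m; rewrite pderivE !mulXE pderivE mbump_neq // mdrop_val (negbTE neq_ij).
case: ifP => _; case: ifP => _; rewrite ?mulr0 //.
congr (_ * p _); apply/ffunP => t; rewrite !ffunE.
by case: (eqVneq t i) => [->|//]; rewrite (negbTE neq_ij).
Qed.

(* The hypothesis says that [x_i p] is not truncated. *)
Lemma pderiv_mulXii i (p : P) : (forall m : M, (d <= m i)%N -> p m = 0) ->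
  pderiv i (mulX i p) = mulX i (pderiv i p) + p.
Proof.
move=> p_trunc; apply/ffunP=> m; rewrite [RHS]ffunE !mulXE !pderivE.
have [lt_mi_d|le_d_mi] := ltnP (m i) d; last first.
  rewrite (p_trunc m) // addr0; case: ifP => // mi_gt0.
  by rewrite mdropK // (p_trunc m) // mulr0; case: ifP.
rewrite mulXE mbump_val // eqxx /= mbumpK //.
have [mi0|mi_gt0] := posnP (m i); first by rewrite mi0 add0r mul1r.
rewrite mdrop_val eqxx (leq_ltn_trans (leq_pred _) lt_mi_d) mdropK //.
by rewrite prednK // -natr1 mulrDl mul1r.
Qed.

Lemma mmul_linformZ (l : 'I_n -> K) c (p : P) :
  mmul (linform d l) (c *: p) = c *: mmul (linform d l) p.
Proof.
rewrite !mmul_linform scaler_sumr; apply: eq_bigr => j _.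
by rewrite linearZ /= !scalerA mulrC.
Qed.

Lemma pderiv_mmul_linform (l : 'I_n -> K) i (p : P) :
  (forall m : M, (d <= m i)%N -> p m = 0) ->
  pderiv i (mmul (linform d l) p) = mmul (linform d l) (pderiv i p) + l i *: p.
Proof.
move=> p_trunc; rewrite !mmul_linform linear_sum (bigD1 i) //= [in RHS](bigD1 i) //=.
rewrite linearZ /= pderiv_mulXii // scalerDr addrAC; congr (_ + _).
by congr (_ + _); apply: eq_bigr => j neq_ji; rewrite linearZ /= pderiv_mulX // eq_sym.
Qed.

Lemma homogeneous_mpow_linform (l : 'I_n -> K) k :
  homogeneous k (mpow (linform d l) k).
Proof.
elim: k => [|k IH] m; rewrite /mpow /=.
  rewrite ffunE; case: forallP => [m0 _|_]; last by rewrite eqxx.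
  by rewrite /mdeg big1 // => j _; apply/eqP.
apply: contraNeq => deg_m; apply/eqP.
rewrite mmul_linform sum_ffunE big1 // => j _.
rewrite ffunE mulXE; case: ifP => mj_gt0; last by rewrite scaler0.
rewrite [X in _ *: X](_ : _ = 0) ?scaler0 //; apply: contraNeq deg_m.
by move=> /IH; rewrite (mdeg_mdrop mj_gt0) => ->; rewrite eqxx.
Qed.

Lemma pderiv_mpow_linform (l : 'I_n -> K) k i : (k <= d)%N ->
  pderiv i (mpow (linform d l) k) = (k%:R * l i) *: mpow (linform d l) k.-1.
Proof.
elim: k => [_|k IH lt_kd].
  apply/ffunP=> m; rewrite mul0r scale0r pderivE !ffunE; case: ifP => // lt_mi_d.
  by case: forallP => [/(_ i)|]; rewrite ?mulr0 // mbump_val // eqxx.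
have pow_trunc (m : M) : (d <= m i)%N -> mpow (linform d l) k m = 0.
  move=> le_d_mi; apply/eqP; apply: contraTT le_d_mi => /homogeneous_mpow_linform deg_m.
  by rewrite -ltnNge (leq_ltn_trans (leq_mon_mdeg m i)) // deg_m.
rewrite [mpow _ k.+1]/= pderiv_mmul_linform // IH 1?ltnW // mmul_linformZ.
case: k {IH pow_trunc} lt_kd => [|k] _; first by rewrite mul0r scale0r add0r mul1r.
by rewrite -scalerDl -[in RHS]natr1 mulrDl mul1r.
Qed.

End Derivatives.

Lemma dimv_le_limg_add (K : fieldType) (vT : vectType K) (f : 'Hom(vT, vT))
    (D U W : {vspace vT}) :
  (D <= U)%VS -> (U <= f @: U + W)%VS -> (\dim D <= \dim (f @: D) + \dim W)%N.
Proof.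
move=> sDU sU_fUW.
have dim_kerU : (\dim (U :&: lker f) <= \dim W)%N.
  rewrite -(leq_add2r (\dim (f @: U))) limg_ker_dim [X in (_ <= X)%N]addnC.
  exact: leq_trans (dimvS sU_fUW) (dimv_add_leqif _ _).
rewrite -(limg_ker_dim f D) addnC leq_add2l (leq_trans _ dim_kerU) //.
by apply/dimvS/capvS.
Qed.

Section ApolarAction.
Variables (K : fieldType) (n d : nat).
Local Notation M := (mon n d).
Local Notation P := (mpoly K n d).

Definition apolar_pairing (a l : 'I_n -> K) : K := \sum_(i < n) a i * l i.

Lemma lin_apolar_is_linear a : linear (@lin_apolar K n d a).
Proof.
move=> c p q; rewrite /lin_apolar scaler_sumr -big_split /=.
by apply: eq_bigr => i _; rewrite linearP scalerDr !scalerA mulrC.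
Qed.

HB.instance Definition _ a :=
  GRing.isLinear.Build K P P *:%R (@lin_apolar K n d a) (lin_apolar_is_linear a).

Lemma lin_apolar_mpow_linform a l k : (k <= d)%N ->
  lin_apolar a (mpow (linform d l) k) =
    (k%:R * apolar_pairing a l) *: mpow (linform d l) k.-1.
Proof.
move=> le_kd; rewrite /lin_apolar /apolar_pairing mulr_sumr scaler_suml.
by apply: eq_bigr => i _; rewrite pderiv_mpow_linform // scalerA mulrCA.
Qed.

Lemma pderiv_lin_apolar a i (p : P) :
  pderiv i (lin_apolar a p) = lin_apolar a (pderiv i p).
Proof.
by rewrite /lin_apolar linear_sum; apply: eq_bigr => j _; rewrite linearZ /= pderivC.
Qed.

Lemma pderivm_lin_apolar a (b : M) (p : P) :
  pderivm b (lin_apolar a p) = lin_apolar a (pderivm b p).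
Proof.
rewrite /pderivm; elim: (enum 'I_n) => //= i s ->.
by elim: (b i : nat) => //= k ->; rewrite pderiv_lin_apolar.
Qed.

Lemma pderivm_memv (U : {vspace P}) (b : M) (p : P) :
  (forall i v, v \in U -> pderiv i v \in U) -> p \in U -> pderivm b p \in U.
Proof.
move=> U_closed pU; rewrite /pderivm; elim: (enum 'I_n) => //= i s IH.
by elim: (b i : nat) => //= k IHk; apply: U_closed.
Qed.

Definition derivative_span (p : P) : {vspace P} :=
  <<[seq pderivm b p | b <- enum M]>>%VS.

Lemma derivative_span_sub (U : {vspace P}) (p : P) :
  (forall i v, v \in U -> pderiv i v \in U) -> p \in U -> (derivative_span p <= U)%VS.
Proof.
by move=> U_closed pU; apply/span_subvP => _ /mapP[b _ ->]; apply: pderivm_memv.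
Qed.

Lemma limg_derivative_span a (p : P) :
  (linfun (lin_apolar a) @: derivative_span p)%VS = derivative_span (lin_apolar a p).
Proof.
rewrite limg_span -map_comp; congr <<_>>%VS; apply: eq_map => b /=.
by rewrite lfunE pderivm_lin_apolar.
Qed.

End ApolarAction.

Section WaringSpan.
Variables (K : fieldType) (n d r : nat) (a : 'I_n -> K) (l : 'I_r -> 'I_n -> K).
Local Notation P := (mpoly K n d).

(* The weight [alpha(l_j)] discards the [l_j] annihilated by [alpha]; on the
   remaining ones [alpha] maps [l_j^(k+1)] to a nonzero multiple of [l_j^k]. *)
Local Notation wpow j k :=
  (apolar_pairing a (l j) *: mpow (linform d (l j)) k) (only parsing).

Definition waring_span : {vspace P} :=
  <<[seq wpow jk.1 (jk.2 : nat) | jk : 'I_r * 'I_d]>>%VS.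

Definition waring_top_span : {vspace P} := <<[seq wpow j d.-1 | j : 'I_r]>>%VS.

Lemma wpow_mem_waring_span j k : (k < d)%N -> wpow j k \in waring_span.
Proof.
move=> lt_kd; apply: memv_span.
exact: (image_f (fun jk : 'I_r * 'I_d => wpow jk.1 (jk.2 : nat)) (x := (j, Ordinal lt_kd))).
Qed.

Lemma waring_span_pderiv_closed i v : v \in waring_span -> pderiv i v \in waring_span.
Proof.
suff: (linfun (pderiv i) @: waring_span <= waring_span)%VS.
  by move=> /subvP sub vV; apply: sub; rewrite -(lfunE (pderiv i)); apply: memv_img.
rewrite limg_span; apply/span_subvP => _ /mapP[_ /imageP[[j k] _ ->] ->] /=.
rewrite lfunE /= linearZ /= pderiv_mpow_linform 1?ltnW // scalerA mulrC -scalerA.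
by rewrite memvZ // wpow_mem_waring_span // (leq_ltn_trans (leq_pred _)).
Qed.

Lemma lin_apolar_waring_mem (c : 'I_r -> K) :
  lin_apolar a (\sum_(j < r) c j *: mpow (linform d (l j)) d) \in waring_span.
Proof.
rewrite linear_sum; apply: memv_suml => j _.
rewrite linearZ /= lin_apolar_mpow_linform // scalerA mulrA -scalerA.
have [d0|d_gt0] := posnP d; last by rewrite memvZ // wpow_mem_waring_span // prednK.
have -> : (d%:R : K) = 0 by rewrite d0.
by rewrite mulr0 scale0r mem0v.
Qed.

Hypothesis charK0 : [pchar K] =i pred0.

Lemma waring_span_sub_limg :
  (waring_span <= linfun (lin_apolar a) @: waring_span + waring_top_span)%VS.
Proof.
apply/span_subvP => _ /imageP[[j k] _ ->] /=.
have [lt_k1d|le_dk1] := ltnP k.+1 d; last first.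
  apply/(subvP (addvSr _ _))/memv_span.
  case: k le_dk1 => k lt_kd /= le_dk1.
  have <- : d.-1 = k.
    by apply/eqP; rewrite -eqSS prednK ?(leq_ltn_trans _ lt_kd) // eqn_leq le_dk1.
  exact: (image_f (fun j : 'I_r => wpow j d.-1)).
have [->|alpha_lj] := eqVneq (apolar_pairing a (l j)) 0; first by rewrite scale0r mem0v.
apply/(subvP (addvSl _ _)).
have k1_neq0 : (k.+1%:R : K) != 0 by rewrite (pcharf0P K).1.
suff -> : wpow j k = linfun (lin_apolar a) ((k.+1%:R * apolar_pairing a (l j))^-1 *: wpow j k.+1).
  by apply: memv_img; rewrite memvZ // wpow_mem_waring_span.
set q := mpow _ k.+1; rewrite lfunE /= scalerA linearZ /= {}/q.
rewrite lin_apolar_mpow_linform 1?ltnW // scalerA.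
by rewrite mulrAC mulVf ?mul1r // mulf_neq0.
Qed.

Lemma dim_waring_top_span : (\dim waring_top_span <= r)%N.
Proof. by rewrite (leq_trans (dim_span _)) // size_image card_ord. Qed.

End WaringSpan.

Theorem mainTheorem5 (K : closedFieldType) (Hchar : [pchar K] =i pred0)
  (n d : nat) (F : mpoly K n d) (HF : homogeneous d F) (a : 'I_n -> K) :
  forall r : nat, waring_decomp F r ->
  (apolar_length (lin_apolar a F)
     <= r + apolar_length (lin_apolar a (lin_apolar a F)))%N.
Proof.
(* [HF] is implied by the decomposition and not needed. *)
move=> r [c [l ->]].
have derivs_sub := derivative_span_sub (@waring_span_pderiv_closed _ _ d _ a l)
  (lin_apolar_waring_mem d a l c).
have := dimv_le_limg_add derivs_sub (waring_span_sub_limg d a l Hchar).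
rewrite limg_derivative_span => /leq_trans; apply.
by rewrite addnC; apply: leq_add (dim_waring_top_span d a l) (leqnn _).
Qed.
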